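(* Let $\Phi:\mathcal G^m_{[n]}\to(\mathbb R^m)^n$ be a vector-valued Shapley operator. Then for every $k\in[m]$ and every $i\in[n]$, the $k$-th coordinate $\pi_k(\Phi_i(v))$ depends only on the scalar game $\pi_k\circ v$. Equivalently, there exists a scalar value operator $\phi=(\phi_1,\dots,\phi_n):\mathcal G_{[n]}\to\mathbb R^n$ (the same for all $k$) such that for all $v\in\mathcal G^m_{[n]}$ and all $i\in[n]$, $$\Phi_i(v)=\big(\phi_i(\pi_1\circ v),\dots,\phi_i(\pi_m\circ v)\big).$$
   Context: Let $n,m\in\mathbb N$, $[n]=\{1,\dots,n\}$ and $\mathcal P([n])$ its power set. Let $\mathcal G_{[n]}=\{v:\mathcal P([n])\to\mathbb R:\ v(\varnothing)=0\}$ and $\mathcal G^m_{[n]}=\{v:\mathcal P([n])\to\mathbb R^m:\ v(\varnothing)=0\}$, real vector spaces under pointwise operations (elements are called games). For $k\in[m]$, $\pi_k:\mathbb R^m\to\mathbb R$ denotes the $k$-th coordinate projection. A scalar value operator is a map $\mathcal G_{[n]}\to\mathbb R^n$. A vector-valued value operator is a map $\Phi:\mathcal G^m_{[n]}\to(\mathbb R^m)^n$, $v\mapsto(\Phi_1(v),\dots,\Phi_n(v))$. It is called a vector-valued Shapley operator if, for all games (equalities in $\mathbb R^m$): (i) Efficiency: $\sum_{i=1}^n\Phi_i(v)=v([n])$; (ii) Symmetry: if $i\neq j$ and $v(S\cup\{i\})=v(S\cup\{j\})$ for all $S\subseteq[n]\setminus\{i,j\}$, then $\Phi_i(v)=\Phi_j(v)$;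 (iii) Dummy: if $v(S\cup\{i\})=v(S)$ for all $S\subseteq[n]\setminus\{i\}$, then $\Phi_i(v)=0$; (iv) Additivity: $\Phi(\alpha v+\beta w)=\alpha\Phi(v)+\beta\Phi(w)$ for all $v,w\in\mathcal G^m_{[n]}$, $\alpha,\beta\in\mathbb R$. For $m=1$ these are the scalar Shapley axioms for a scalar value operator. *)

From HB Require Import structures.
From mathcomp Require Import all_boot all_order all_algebra.
From Stdlib Require Import Rdefinitions.
From mathcomp Require Import Rstruct.
Set Implicit Arguments. Unset Strict Implicit. Unset Printing Implicit Defensive.
Import Order.TTheory GRing.Theory Num.Theory.
Local Open Scope ring_scope.

(* Players [n] are 'I_n; coalitions are {set 'I_n}.
   A vector game with m coordinates is v : {set 'I_n} -> 'I_m -> R with v set0 = 0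
   (coordinate k of v(S) is v S k). *)
Definition vfun (n m : nat) := {set 'I_n} -> 'I_m -> R.

Definition is_vgame (n m : nat) (v : vfun n m) : Prop := forall k, v set0 k = 0.

(* A vector-valued value operator: Phi v i k = k-th coordinate of Phi_i(v).
   Only its values on games (is_vgame) are relevant. *)
Definition vop (n m : nat) := vfun n m -> 'I_n -> 'I_m -> R.

Definition sop (n : nat) := ({set 'I_n} -> R) -> 'I_n -> R.

Definition efficiency n m (Phi : vop n m) : Prop :=
  forall v, is_vgame v -> forall k, \sum_(i < n) Phi v i k = v setT k.

Definition symmetric_players n m (v : vfun n m) (i j : 'I_n) : Prop :=
  forall S : {set 'I_n}, i \notin S -> j \notin S -> v (i |: S) = v (j |: S).

Definition symmetry n m (Phi : vop n m) : Prop :=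
  forall v, is_vgame v -> forall i j : 'I_n, i != j ->
    symmetric_players v i j -> Phi v i = Phi v j.

Definition dummy_player n m (v : vfun n m) (i : 'I_n) : Prop :=
  forall S : {set 'I_n}, i \notin S -> v (i |: S) = v S.

Definition dummy n m (Phi : vop n m) : Prop :=
  forall v, is_vgame v -> forall i, dummy_player v i -> forall k, Phi v i k = 0.

Definition additivity n m (Phi : vop n m) : Prop :=
  forall (v w : vfun n m) (a b : R), is_vgame v -> is_vgame w ->
    Phi (fun S k => a * v S k + b * w S k) =
    (fun i k => a * Phi v i k + b * Phi w i k).

Definition vector_shapley n m (Phi : vop n m) : Prop :=
  [/\ efficiency Phi, symmetry Phi, dummy Phi & additivity Phi].

From HB Require Import structures.
From mathcomp Require Import all_boot all_order all_algebra.
From Stdlib Require Import Rdefinitions.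
From mathcomp Require Import Rstruct.
From Stdlib Require Import FunctionalExtensionality.
Set Implicit Arguments. Unset Strict Implicit. Unset Printing Implicit Defensive.
Import Order.TTheory GRing.Theory Num.Theory.
Local Open Scope ring_scope.

(* Moebius inversion on the subset lattice writes every game as a sum of unanimity games
   u_S weighted by its Harsanyi dividends, and the dividends of a vector game are computed
   coordinatewise.  Efficiency, symmetry and dummy force a value operator to split the weight
   of u_S equally among the members of S, so by additivity every vector Shapley operator is,
   coordinate by coordinate, Harsanyi's formula for the Shapley value. *)

Section Moebius.
Variables (I : finType) (R : pzRingType).

Lemma subsetU1_notin (a : I) (A B : {set I}) : a \notin A ->
  (A \subset a |: B) = (A \subset B).
Proof.
move=> aA; rewrite -subDset.
by have /setDidPl -> : [disjoint A & [set a]] by rewrite disjoint_sym disjoints1.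
Qed.

Lemma sum_signed_interval (U T : {set I}) : U \subset T ->
  \sum_(S : {set I} | (U \subset S) && (S \subset T)) (-1) ^+ #|S :\: U|
  = (U == T)%:R :> R.
Proof.
move=> sUT; have [<-|neUT] := eqVneq U T.
  rewrite (big_pred1 U) ?setDv ?cards0 // => S.
  by rewrite /pred1 /= eqEsubset andbC.
have [a aT aU] : exists2 a, a \in T & a \notin U.
  by apply/subsetPn; apply: contra neUT => sTU; rewrite eqEsubset sUT sTU.
(* S |-> a |: S is a sign-reversing bijection from the terms with a \notin S onto the others. *)
rewrite (bigID (fun S : {set I} => a \in S)) /=.
rewrite (reindex_onto (fun S => a |: S) (fun S => S :\ a)) /=; last first.
  by move=> S /andP [_]; apply: setD1K.
rewrite -[RHS](addNr (\sum_(S : {set I} | (U \subset S) && (S \subset T) && (a \notin S))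
                        (-1) ^+ #|S :\: U| : R)) -sumrN.
congr (_ + _); apply: eq_big => S.
  have [aS|aS] := boolP (a \in S).
    rewrite andbF; apply/negbTE/nandP; right.
    by apply: contraTneq aS => <-; rewrite setD11.
  rewrite setU1K // eqxx setU11 subsetU1_notin // subUset sub1set aT !andbT.
  by rewrite andbC.
move=> /andP [_ /eqP eSa]; have aS : a \notin S by rewrite -eSa setD11.
have -> : (a |: S) :\: U = a |: (S :\: U).
  by apply/setP => x; rewrite !inE; case: eqP => // ->; rewrite aU.
by rewrite cardsU1 inE (negPf aS) andbF exprS mulN1r.
Qed.

Definition harsanyi (w : {set I} -> R) (S : {set I}) : R :=
  \sum_(U : {set I} | U \subset S) (-1) ^+ #|S :\: U| * w U.

Lemma harsanyi0 (w : {set I} -> R) : harsanyi w set0 = w set0.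
Proof.
rewrite /harsanyi (big_pred1 set0) => [|U]; last by rewrite /= subset0.
by rewrite setDv cards0 mul1r.
Qed.

Lemma sum_harsanyi (w : {set I} -> R) (T : {set I}) :
  \sum_(S : {set I} | S \subset T) harsanyi w S = w T.
Proof.
rewrite /harsanyi (exchange_big_dep (fun U : {set I} => U \subset T)) /=; last first.
  by move=> S U sST sUS; apply: subset_trans sST.
rewrite (eq_bigr (fun U => (U == T)%:R * w U)) => [|U sUT]; last first.
  rewrite -big_distrl -(sum_signed_interval sUT); congr (_ * _).
  by apply: eq_bigl => S; rewrite andbC.
rewrite (bigD1 T) //= eqxx mul1r big1 ?addr0 // => U /andP [_ /negPf ->].
by rewrite mul0r.
Qed.
End Moebius.

Definition unanimity n m (S : {set 'I_n}) (c : 'I_m -> R) : vfun n m :=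
  fun T l => if S \subset T then c l else 0.

Definition vharsanyi n m (v : vfun n m) (S : {set 'I_n}) : 'I_m -> R :=
  fun l => harsanyi (fun T => v T l) S.

Lemma unanimity_decomposition n m (v : vfun n m) T l : is_vgame v ->
  v T l = \sum_(S : {set 'I_n} | S != set0) unanimity S (vharsanyi v S) T l.
Proof.
move=> gv; rewrite -(sum_harsanyi (fun U => v U l)) (bigD1 set0) ?sub0set //=.
rewrite harsanyi0 gv add0r.
by rewrite -big_mkcondr; apply: eq_bigl => S; rewrite andbC.
Qed.

(* Harsanyi's form of the Shapley value: each dividend is shared equally by its coalition. *)
Definition shapley n : sop n :=
  fun w i => \sum_(S : {set 'I_n} | i \in S) harsanyi w S / #|S|%:R.

Section UnanimityGames.
Variables (n m : nat) (S : {set 'I_n}) (c : 'I_m -> R).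

Lemma unanimity_game : S != set0 -> is_vgame (unanimity S c).
Proof. by move=> S0 k; rewrite /unanimity subset0 (negPf S0). Qed.

Lemma unanimity_dummy i : i \notin S -> dummy_player (unanimity S c) i.
Proof. by move=> iS T _; rewrite /unanimity subsetU1_notin. Qed.

Lemma unanimity_symmetric i j :
  i \in S -> j \in S -> symmetric_players (unanimity S c) i j.
Proof.
move=> iS jS T iT jT; rewrite /unanimity.
have [-> //|neij] := eqVneq i j.
have notsub x y : x \in S -> x != y -> x \notin T -> (S \subset y |: T) = false.
  by move=> xS nexy xT; apply/negbTE/subsetPn; exists x; rewrite // !inE negb_or nexy xT.
by rewrite (notsub j i) 1?eq_sym // (notsub i j).
Qed.

End UnanimityGames.

Lemma vop_ext n m (Phi : vop n m) (v w : vfun n m) i k :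
  (forall T l, v T l = w T l) -> Phi v i k = Phi w i k.
Proof. by move=> vw; congr (Phi _ i k); do 2 (apply: functional_extensionality => ?). Qed.

Section ShapleyAxioms.
Variables (n m : nat) (Phi : vop n m).
Hypotheses (Phi_eff : efficiency Phi) (Phi_sym : symmetry Phi).
Hypotheses (Phi_dummy : dummy Phi) (Phi_lin : additivity Phi).

Lemma Phi_unanimity (S : {set 'I_n}) (c : 'I_m -> R) i k : S != set0 ->
  Phi (unanimity S c) i k = if i \in S then c k / #|S|%:R else 0.
Proof.
move=> S0; have gS := unanimity_game c S0.
case: ifPn => [iS|iS]; last by apply: (Phi_dummy gS (unanimity_dummy c iS)).
have Phi_j j : j \in S -> Phi (unanimity S c) j k = Phi (unanimity S c) i k.
  move=> jS; have [-> //|neji] := eqVneq j i.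
  by rewrite (Phi_sym gS neji (unanimity_symmetric c jS iS)).
have := Phi_eff gS k; rewrite (bigID (fun j => j \in S)) /= [X in _ + X]big1; last first.
  by move=> j jS; apply: (Phi_dummy gS (unanimity_dummy c jS)).
rewrite addr0 (eq_bigr _ Phi_j) sumr_const /unanimity subsetT => <-.
have cardS : #|S|%:R != 0 :> R by rewrite pnatr_eq0 -lt0n card_gt0.
by rewrite -[_ *+ #|S|]mulr_natr mulfK.
Qed.

Lemma Phi_zero i k : Phi (fun _ _ => 0) i k = 0.
Proof.
have g0 : is_vgame (fun (_ : {set 'I_n}) (_ : 'I_m) => 0 : R) by [].
by have /(congr1 (fun F => F i k)) := Phi_lin 0 0 g0 g0; rewrite /= !mul0r addr0.
Qed.

Lemma Phi_add v w i k : is_vgame v -> is_vgame w ->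
  Phi (fun T l => v T l + w T l) i k = Phi v i k + Phi w i k.
Proof.
move=> gv gw; have /(congr1 (fun F => F i k)) := Phi_lin 1 1 gv gw.
by rewrite /= !mul1r => <-; apply: vop_ext => T l; rewrite !mul1r.
Qed.

Lemma Phi_sum (J : finType) (P : pred J) (f : J -> vfun n m) i k :
  (forall x, P x -> is_vgame (f x)) ->
  Phi (fun T l => \sum_(x | P x) f x T l) i k = \sum_(x | P x) Phi (f x) i k.
Proof.
move=> gf; elim: (index_enum J) => [|x r IH].
  by rewrite big_nil -[RHS](Phi_zero i k); apply: vop_ext => T l; rewrite big_nil.
rewrite big_cons; case: ifPn => Px; last first.
  by rewrite -IH; apply: vop_ext => T l; rewrite big_cons (negPf Px).
have gr : is_vgame (fun T l => \sum_(y <- r | P y) f y T l).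
  by move=> l; rewrite big1_seq // => y /andP [Py _]; apply: gf.
rewrite -IH -Phi_add //; last exact: gf.
by apply: vop_ext => T l; rewrite big_cons Px.
Qed.

Lemma Phi_shapley v i k : is_vgame v -> Phi v i k = shapley (fun S => v S k) i.
Proof.
move=> gv; rewrite (vop_ext _ _ _ (fun T l => unanimity_decomposition T l gv)).
rewrite Phi_sum => [|S S0]; last exact: unanimity_game.
rewrite (eq_bigr _ (fun S S0 => Phi_unanimity (vharsanyi v S) i k S0)) -big_mkcondr.
by apply: eq_bigl => S; rewrite andb_idl // => iS; apply/set0Pn; exists i.
Qed.

End ShapleyAxioms.

Theorem mainTheorem1 (n m : nat) (Phi : vop n m) :
  vector_shapley Phi ->
  exists phi : sop n,
    forall v : vfun n m, is_vgame v ->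
      forall (i : 'I_n) (k : 'I_m), Phi v i k = phi (fun S => v S k) i.
Proof.
case=> Phi_eff Phi_sym Phi_dummy Phi_lin.
by exists (@shapley n) => v gv i k; apply: Phi_shapley.
Qed.
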